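(* For any nested expression $F$ and any consistent sets of explicit literals $H\subseteq T$: (i) $H\models F^T$ iff ($T\models F$ and $H\models F^T_+$); (ii) $H=\!\!|\;F^T$ iff ($T=\!\!|\;F$ and $H=\!\!|\;F^T_-$).
   Context: Fix a set $\mathit{At}$ of atoms. An explicit literal is $p$ or $\sim p$; a set of explicit literals is consistent if it never contains both $p$ and $\sim p$. Formulas: $\varphi ::= p\mid\bot\mid\varphi\wedge\varphi\mid\varphi\vee\varphi\mid\varphi\to\varphi\mid\sim\varphi$ with $\neg\varphi:=\varphi\to\bot$, $\top:=\neg\bot$. Nested expressions are the formulas built from $\top,\bot$, atoms, $\wedge,\vee,\neg,\sim$. Classical satisfaction/falsification by a consistent set $T$: $T\not\models\bot$, $T=\!\!|\;\bot$; $T\models p$ iff $p\in T$, $T=\!\!|\;p$ iff $\sim p\in T$; $\wedge$: satisfied iff both, falsified iff at least one falsified; $\vee$: satisfied iff at least one, falsified iff both falsified; $T\models\sim\varphi$ iff $T=\!\!|\;\varphi$, $T=\!\!|\;\sim\varphi$ iff $T\models\varphi$; $T\models\varphi\to\psi$ iff $T\not\models\varphi$ or $T\models\psi$, $T=\!\!|\;\varphi\to\psi$ iff $T\models\varphi$ and $T=\!\!|\;\psi$ (so $T\models\neg\varphi$ iff $T\not\models\varphi$, $T=\!\!|\;\neg\varphi$ iff $T\models\varphi$; $T\models\top$ and $T$ does not falsify $\top$). Reduct of nested expressions: $\top^T=\top$, $\bot^T=\bot$, $p^T=p$, $(F\wedge G)^T=F^T\wedge G^T$, $(F\vee G)^T=F^T\vee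 G^T$, $(\sim F)^T=\sim(F^T)$, $(\neg F)^T=\bot$ if $T\models F$, $\top$ otherwise. Transformations $\varphi^T_+$, $\varphi^T_-$ (clauses for $\neg\alpha$ take priority over those for $\to$): $\varphi^T_+=\bot$ if $T\not\models\varphi$; otherwise $p^T_+=p$; $(\alpha\otimes\beta)^T_+=\alpha^T_+\otimes\beta^T_+$ for $\otimes\in\{\wedge,\vee\}$; $(\alpha\to\beta)^T_+=\neg(\alpha^T_+)\vee\beta^T_+$; $(\neg\alpha)^T_+=\neg(\alpha^T_+)$; $(\sim\alpha)^T_+=\sim(\alpha^T_-)$. $\varphi^T_-=\top$ if $T$ does not falsify $\varphi$; otherwise $p^T_-=p$; $\bot^T_-=\bot$; $(\alpha\otimes\beta)^T_-=\alpha^T_-\otimes\beta^T_-$; $(\alpha\to\beta)^T_-=\beta^T_-$; $(\neg\alpha)^T_-=\bot$; $(\sim\alpha)^T_-=\sim(\alpha^T_+)$. *)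

From Stdlib Require Import Bool.

Section Syntax.
Variable At : Type.

(* Formulas: p | bot | /\ | \/ | -> | ~ (strong negation "sim") *)
Inductive form : Type :=
| Atom : At -> form
| Bot : form
| And : form -> form -> form
| Or : form -> form -> form
| Imp : form -> form -> form
| Sneg : form -> form.

Definition Neg (f : form) : form := Imp f Bot.
Definition Top : form := Neg Bot.

Inductive lit : Type := Pos (p : At) | NegL (p : At).

Definition litset := lit -> bool.

Definition consistent (T : litset) : Prop :=
  forall p, ~ (T (Pos p) = true /\ T (NegL p) = true).

Definition subset (H T : litset) : Prop := forall l, H l = true -> T l = true.

Fixpoint sat (T : litset) (f : form) : bool :=
  match f with
  | Atom p => T (Pos p)
  | Bot => false
  | And a b => sat T a && sat T b
  | Or a b => sat T a || sat T b
  | Imp a b => negb (sat T a) || sat T b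
  | Sneg a => fals T a
  end
with fals (T : litset) (f : form) : bool :=
  match f with
  | Atom p => T (NegL p)
  | Bot => true
  | And a b => fals T a || fals T b
  | Or a b => fals T a && fals T b
  | Imp a b => sat T a && fals T b
  | Sneg a => sat T a
  end.

Fixpoint nested (f : form) : bool :=
  match f with
  | Atom _ => true
  | Bot => true
  | And a b => nested a && nested b
  | Or a b => nested a && nested b
  | Imp a Bot => nested a         (* neg a ; covers top = neg bot *)
  | Imp _ _ => false
  | Sneg a => nested a
  end.

(* reduct F^T of a nested expression
   (the last Imp clause is irrelevant for nested expressions) *)
Fixpoint reduct (T : litset) (f : form) : form :=
  match f with
  | Atom p => Atom p
  | Bot => Bot
  | And a b => And (reduct T a) (reduct T b)
  | Or a b => Or (reduct T a) (reduct T b)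
  | Imp a Bot => if sat T a then Bot else Top
  | Imp a b => Imp (reduct T a) (reduct T b)
  | Sneg a => Sneg (reduct T a)
  end.

(* transformations phi^T_+ and phi^T_- ; clauses for neg take priority *)
Fixpoint tplus (T : litset) (f : form) : form :=
  if negb (sat T f) then Bot else
  match f with
  | Atom p => Atom p
  | Bot => Bot
  | And a b => And (tplus T a) (tplus T b)
  | Or a b => Or (tplus T a) (tplus T b)
  | Imp a Bot => Neg (tplus T a)
  | Imp a b => Or (Neg (tplus T a)) (tplus T b)
  | Sneg a => Sneg (tminus T a)
  end
with tminus (T : litset) (f : form) : form :=
  if negb (fals T f) then Top else
  match f with
  | Atom p => Atom p
  | Bot => Bot
  | And a b => And (tminus T a) (tminus T b)
  | Or a b => Or (tminus T a) (tminus T b)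
  | Imp a Bot => Bot
  | Imp a b => tminus T b
  | Sneg a => Sneg (tplus T a)
  end.

End Syntax.

Arguments Atom {At}. Arguments Bot {At}. Arguments And {At}. Arguments Or {At}.
Arguments Imp {At}. Arguments Sneg {At}. Arguments Neg {At}. Arguments Top {At}.
Arguments Pos {At}. Arguments NegL {At}.
Arguments consistent {At}. Arguments subset {At}.
Arguments sat {At}. Arguments fals {At}. Arguments nested {At}.
Arguments reduct {At}. Arguments tplus {At}. Arguments tminus {At}.

(** Outside its guard, [F^T_+] is [bot] and [F^T_-] is [top]; consequently
    [H |= F^T_+] already forces [T |= F], and [H =| F^T_-] forces [T =| F].
    Modulo this guard, satisfaction and falsification of [F^T_+] and [F^T_-]
    by [H] obey the same compositional equations as those of the reduct
    [F^T], so the two coincide on nested expressions by structural induction. *)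

From Stdlib Require Import Bool.

Section Transformations.
Variables (At : Type) (H T : litset At).

Lemma tplus_unsat (f : form At) : sat T f = false -> tplus T f = Bot.
Proof. intros E; destruct f; cbn [tplus]; rewrite E; reflexivity. Qed.

Lemma tminus_unfals (f : form At) : fals T f = false -> tminus T f = Top.
Proof. intros E; destruct f; cbn [tminus]; rewrite E; reflexivity. Qed.

Lemma sat_tplus_sat (f : form At) : sat H (tplus T f) = true -> sat T f = true.
Proof.
  destruct (sat T f) eqn:E; [reflexivity|].
  rewrite (tplus_unsat _ E); discriminate.
Qed.

Lemma fals_tminus_fals (f : form At) : fals H (tminus T f) = true -> fals T f = true.
Proof.
  destruct (fals T f) eqn:E; [reflexivity|].
  rewrite (tminus_unfals _ E); discriminate.
Qed.

Lemma sat_tplus_Atom (p : At) :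
  subset H T -> sat H (tplus T (Atom p)) = H (Pos p).
Proof.
  intros Hsub; simpl.
  destruct (T (Pos p)) eqn:E; [reflexivity|].
  destruct (H (Pos p)) eqn:E'; [rewrite (Hsub _ E') in E; discriminate|reflexivity].
Qed.

Lemma fals_tminus_Atom (p : At) :
  subset H T -> fals H (tminus T (Atom p)) = H (NegL p).
Proof.
  intros Hsub; simpl.
  destruct (T (NegL p)) eqn:E; [reflexivity|].
  destruct (H (NegL p)) eqn:E'; [rewrite (Hsub _ E') in E; discriminate|reflexivity].
Qed.

Lemma sat_tplus_And (a b : form At) :
  sat H (tplus T (And a b)) = sat H (tplus T a) && sat H (tplus T b).
Proof.
  simpl; destruct (sat T a) eqn:Ea; [destruct (sat T b) eqn:Eb|]; simpl.
  - reflexivity.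
  - rewrite (tplus_unsat _ Eb), andb_false_r; reflexivity.
  - rewrite (tplus_unsat _ Ea); reflexivity.
Qed.

Lemma fals_tminus_And (a b : form At) :
  fals H (tminus T (And a b)) = fals H (tminus T a) || fals H (tminus T b).
Proof.
  simpl; destruct (fals T a) eqn:Ea; [reflexivity|].
  destruct (fals T b) eqn:Eb; [reflexivity|].
  rewrite (tminus_unfals _ Ea), (tminus_unfals _ Eb); reflexivity.
Qed.

Lemma sat_tplus_Or (a b : form At) :
  sat H (tplus T (Or a b)) = sat H (tplus T a) || sat H (tplus T b).
Proof.
  simpl; destruct (sat T a) eqn:Ea; [reflexivity|].
  destruct (sat T b) eqn:Eb; [reflexivity|].
  rewrite (tplus_unsat _ Ea), (tplus_unsat _ Eb); reflexivity.
Qed.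

Lemma fals_tminus_Or (a b : form At) :
  fals H (tminus T (Or a b)) = fals H (tminus T a) && fals H (tminus T b).
Proof.
  simpl; destruct (fals T a) eqn:Ea; [destruct (fals T b) eqn:Eb|]; simpl.
  - reflexivity.
  - rewrite (tminus_unfals _ Eb), andb_false_r; reflexivity.
  - rewrite (tminus_unfals _ Ea); reflexivity.
Qed.

Lemma sat_tplus_Neg (a : form At) : sat H (tplus T (Neg a)) = negb (sat T a).
Proof.
  simpl; rewrite orb_false_r.
  destruct (sat T a) eqn:Ea; [reflexivity|].
  rewrite (tplus_unsat _ Ea); reflexivity.
Qed.

Lemma fals_tminus_Neg (a : form At) : fals H (tminus T (Neg a)) = sat T a.
Proof. simpl; rewrite andb_true_r; destruct (sat T a); reflexivity. Qed.

Lemma sat_tplus_Sneg (a : form At) :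
  sat H (tplus T (Sneg a)) = fals H (tminus T a).
Proof.
  simpl; destruct (fals T a) eqn:Ea; [reflexivity|].
  rewrite (tminus_unfals _ Ea); reflexivity.
Qed.

Lemma fals_tminus_Sneg (a : form At) :
  fals H (tminus T (Sneg a)) = sat H (tplus T a).
Proof.
  simpl; destruct (sat T a) eqn:Ea; [reflexivity|].
  rewrite (tplus_unsat _ Ea); reflexivity.
Qed.

Lemma sat_fals_reduct (F : form At) :
  nested F = true -> subset H T ->
  sat H (reduct T F) = sat H (tplus T F) /\
  fals H (reduct T F) = fals H (tminus T F).
Proof.
  intros Hn Hsub; induction F as [p| |a IHa b IHb|a IHa b IHb|a IHa b _|a IHa];
    simpl in Hn.
  - rewrite sat_tplus_Atom, fals_tminus_Atom by exact Hsub; split; reflexivity.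
  - split; reflexivity.
  - apply andb_true_iff in Hn as [Ha Hb].
    destruct (IHa Ha) as [Sa Fa], (IHb Hb) as [Sb Fb].
    rewrite sat_tplus_And, fals_tminus_And; simpl; rewrite Sa, Sb, Fa, Fb; split; reflexivity.
  - apply andb_true_iff in Hn as [Ha Hb].
    destruct (IHa Ha) as [Sa Fa], (IHb Hb) as [Sb Fb].
    rewrite sat_tplus_Or, fals_tminus_Or; simpl; rewrite Sa, Sb, Fa, Fb; split; reflexivity.
  - destruct b; try discriminate.
    change (Imp a Bot) with (Neg a); rewrite sat_tplus_Neg, fals_tminus_Neg.
    simpl; destruct (sat T a); split; reflexivity.
  - destruct (IHa Hn) as [Sa Fa].
    rewrite sat_tplus_Sneg, fals_tminus_Sneg; simpl; rewrite Sa, Fa; split; reflexivity.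
Qed.

End Transformations.

Theorem corollary2 (At : Type) (F : form At) (H T : litset At) :
  nested F = true -> consistent H -> consistent T -> subset H T ->
  (sat H (reduct T F) = true <-> (sat T F = true /\ sat H (tplus T F) = true)) /\
  (fals H (reduct T F) = true <-> (fals T F = true /\ fals H (tminus T F) = true)).
Proof.
  intros Hn _ _ Hsub.
  destruct (sat_fals_reduct At H T F Hn Hsub) as [-> ->].
  pose proof (sat_tplus_sat At H T F); pose proof (fals_tminus_fals At H T F).
  split; split; tauto.
Qed.
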